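(* Let $\ell_N:\mathbb R^D\to\mathbb R$ be any measurable function, let $\mathcal C$ be a positive definite covariance matrix, and let $\mathcal P_N$ be the transition kernel of the pCN chain with prior covariance $\mathcal C$, log-likelihood $\ell_N$ and parameter $\beta\in(0,1]$ (defined in the context). (i) If $\mathcal C=I_D/D$ and $L,\eta>0$, then for all $\beta\le\min\{1/2,\eta/(4L),\eta^2/64\}$ and all $D\ge1$, \[\sup_{\theta\in B_L}\mathcal P_N\big(\theta,\{\vartheta:\|\theta-\vartheta\|_{\mathbb R^D}\ge\eta/2\}\big)\le e^{-D/2}.\] (ii) If $\mathcal C=\Sigma_\alpha$ and $L,\eta>0$, there exists $c>0$ such that for all $\beta\le\min\{1/2,\eta/(4L),c\eta^2/D\}$ and all $D\ge1$, \[\sup_{\theta\in B_L}\mathcal P_N\big(\theta,\{\vartheta:\|\theta-\vartheta\|_{\mathbb R^D}\ge\eta/2\}\big)\le e^{-D/2}.\]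
   Context: pCN: with $\xi$ distributed $\mathcal N(0,\mathcal C)$, from state $\vartheta$ propose $p=\sqrt{1-\beta}\,\vartheta+\sqrt\beta\,\xi$ and move to $p$ with probability $\min\{1,e^{\ell_N(p)-\ell_N(\vartheta)}\}$, otherwise stay at $\vartheta$. $B_L=\{\theta:\|\theta\|_{\mathbb R^D}\le L\}$. $\Sigma_\alpha$ ($\alpha>d/2$) is the covariance of the first $D$ coordinates of a centred Gaussian sequence in $\ell^2$ whose RKHS is the Sobolev space $H^\alpha$ of a bounded $d$-dimensional domain identified with sequence space via Parseval ($\alpha$-regular Whittle–Matérn-type prior). *)

(* R^D is modelled as D.-tuple R, with
   the library's product (Borel) sigma-algebra on tuples. *)
From HB Require Import structures.
From mathcomp Require Import all_boot all_order all_algebra.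
From mathcomp Require Import all_classical all_reals all_analysis.
Set Implicit Arguments. Unset Strict Implicit. Unset Printing Implicit Defensive.
Import Order.TTheory GRing.Theory Num.Theory.
Local Open Scope classical_set_scope.
Local Open Scope ring_scope.

Section pcn.
Variable R : realType.

Fixpoint leb_iter (n : nat) : (n.-tuple R -> \bar R) -> \bar R :=
  match n return (n.-tuple R -> \bar R) -> \bar R with
  | 0 => fun f => f [tuple]
  | m.+1 => fun f =>
      (\int[@lebesgue_measure R]_(x in [set: R])
          leb_iter (fun t : m.-tuple R => f [tuple of x :: t]))%E
  end.

Definition eucl_norm (D : nat) (x : D.-tuple R) : R :=
  Num.sqrt (\sum_(i < D) (tnth x i) ^+ 2).

Definition tsub (D : nat) (x y : D.-tuple R) : D.-tuple R :=
  [tuple tnth x i - tnth y i | i < D].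

Definition gauss_density (D : nat) (C : 'M[R]_D) (x : D.-tuple R) : R :=
  ((pi *+ 2) ^+ D * \det C) ^-1 `^ (2^-1) *
  expR (- (\sum_(i < D) \sum_(j < D) tnth x i * invmx C i j * tnth x j) / 2).

Definition gauss_int (D : nat) (C : 'M[R]_D) (g : D.-tuple R -> \bar R) : \bar R :=
  leb_iter (fun x => ((gauss_density C x)%:E * g x)%E).

Definition posdef (D : nat) (C : 'M[R]_D) : Prop :=
  C^T = C /\ forall v : 'rV[R]_D, v != 0 -> 0 < (v *m C *m v^T) 0 0.

Definition pcn_prop (D : nat) (beta : R) (theta xi : D.-tuple R) : D.-tuple R :=
  [tuple Num.sqrt (1 - beta) * tnth theta i + Num.sqrt beta * tnth xi i | i < D].

Definition pcn_acc (D : nat) (l : D.-tuple R -> R) (theta p : D.-tuple R) : R :=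
  Num.min 1 (expR (l p - l theta)).

Definition pcn_kernel (D : nat) (C : 'M[R]_D) (l : D.-tuple R -> R) (beta : R)
    (theta : D.-tuple R) (A : set (D.-tuple R)) : \bar R :=
  (gauss_int C (fun xi => (\1_A (pcn_prop beta theta xi)
                            * pcn_acc l theta (pcn_prop beta theta xi))%:E)
   + (\1_A theta)%:E *
     (1 - gauss_int C (fun xi => (pcn_acc l theta (pcn_prop beta theta xi))%:E)))%E.

(* Sigma_alpha: covariance of the first D coordinates of the alpha-regular
   (Whittle-Matern-type) Gaussian sequence prior, diag(k^(-2 alpha/d)). *)
Definition Sigma_alpha (d : nat) (alpha : R) (D : nat) : 'M[R]_D :=
  diag_mx (\row_(i < D) ((i.+1)%:R `^ (- (alpha *+ 2 / d%:R)))).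

End pcn.

From HB Require Import structures.
From mathcomp Require Import all_boot all_order all_algebra.
From mathcomp Require Import all_classical all_reals all_analysis.
From mathcomp Require Import normal_distribution measurable_realfun.
From mathcomp Require Import ring lra.
Set Implicit Arguments. Unset Strict Implicit. Unset Printing Implicit Defensive.
Import Order.TTheory GRing.Theory Num.Theory.
Local Open Scope classical_set_scope.
Local Open Scope ring_scope.

(* The point theta itself is never in the far set.  If ||theta|| <= L and beta L <= eta / 4, a proposal at
   distance >= eta / 2 from theta forces ||xi||^2 >= eta^2 / (16 beta).  Both
   covariances are diagonal, so a Chernoff bound with the Gaussian moment
   generating function E exp(s xi_i^2) = (1 - 2 s C_ii)^(-1/2), for
   s = 3 / (8 max_i C_ii), bounds the probability of this event by
   2^D exp(-3D/2) <= exp(-D/2). *)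

Section iterated_integral.
Variable R : realType.
Local Notation mu := (@lebesgue_measure R).

(* No measurability is needed: the integral of a nonnegative function is the
   supremum of the integrals of its simple minorants. *)
Lemma ge0_le_integralT (f g : R -> \bar R) : (forall x, (0 <= f x)%E) ->
  (forall x, (f x <= g x)%E) ->
  (\int[mu]_(x in [set: R]) f x <= \int[mu]_(x in [set: R]) g x)%E.
Proof.
move=> f0 fg; have g0 x : (0 <= g x)%E by apply: le_trans (fg x).
rewrite !ge0_integralTE //; apply: ereal_sup_le => _ [h hf <-].
by exists h => //= x; apply: le_trans (hf x) (fg x).
Qed.

Lemma leb_iter_ge0 n (f : n.-tuple R -> \bar R) : (forall t, (0 <= f t)%E) ->
  (0 <= leb_iter f)%E.
Proof.
elim: n f => [|n IH] f f0 /=; first exact: f0.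
by apply: integral_ge0 => x _; apply: IH => t; exact: f0.
Qed.

Lemma le_leb_iter n (f g : n.-tuple R -> \bar R) : (forall t, (0 <= f t)%E) ->
  (forall t, (f t <= g t)%E) -> (leb_iter f <= leb_iter g)%E.
Proof.
elim: n f g => [|n IH] f g f0 fg /=; first exact: fg.
apply: ge0_le_integralT => x; first by apply: leb_iter_ge0 => t; exact: f0.
by apply: IH => t; [exact: f0|exact: fg].
Qed.

Lemma leb_iter_prod n (c : R) (g : 'I_n -> R -> R) (G : 'I_n -> R) :
  0 <= c -> (forall i x, 0 <= g i x) -> (forall i, measurable_fun setT (g i)) ->
  (forall i, (\int[mu]_x (g i x)%:E)%E = (G i)%:E) -> (forall i, 0 <= G i) ->
  leb_iter (fun t : n.-tuple R => (c * \prod_i g i (tnth t i))%:E) =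
  (c * \prod_i G i)%:E.
Proof.
elim: n c g G => [|n IH] c g G c0 g0 mg intg G0 /=; first by rewrite !big_ord0.
have inner x : leb_iter (fun t : n.-tuple R =>
      (c * \prod_i g i (tnth [tuple of x :: t] i))%:E) =
    (c * \prod_(i < n) G (lift ord0 i) * g ord0 x)%:E.
  transitivity (leb_iter (fun t : n.-tuple R =>
      (c * g ord0 x * \prod_(i < n) g (lift ord0 i) (tnth t i))%:E)).
    congr leb_iter; apply: funext => t.
    by rewrite big_ord_recl tnth0 mulrA; under eq_bigr do rewrite tnthS.
  rewrite (IH _ (fun i => g (lift ord0 i)) (fun i => G (lift ord0 i))) //.
  - by rewrite mulrAC.
  - by rewrite mulr_ge0.
under eq_integral do rewrite inner EFinM.
rewrite ge0_integralZl_EFin //.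
- by rewrite intg -EFinM big_ord_recl mulrA mulrAC.
- by move=> x _; rewrite lee_fin.
- by apply/measurable_EFinP; exact: mg.
- by rewrite mulr_ge0 // prodr_ge0.
Qed.
End iterated_integral.

Lemma invmx_diag (F : fieldType) n (d : 'rV[F]_n) : (forall i, d 0 i != 0) ->
  invmx (diag_mx d) = diag_mx (\row_i (d 0 i)^-1).
Proof.
move=> d0; have uD : diag_mx d \in unitmx.
  by rewrite unitmxE det_diag unitfE; apply/prodf_neq0 => i _.
have dV : diag_mx d *m diag_mx (\row_i (d 0 i)^-1) = 1%:M.
  rewrite mulmx_diag -diag_const_mx; congr diag_mx.
  by apply/rowP => j; rewrite !mxE mulfV.
by rewrite -[LHS]mulmx1 -dV mulKmx.
Qed.

Section gaussian.
Variable R : realType.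
Local Notation mu := (@lebesgue_measure R).

Lemma sqrtr_prod n (f : 'I_n -> R) : (forall i, 0 <= f i) ->
  Num.sqrt (\prod_i f i) = \prod_i Num.sqrt (f i).
Proof.
elim: n f => [|n IH] f f0; first by rewrite !big_ord0 sqrtr1.
by rewrite !big_ord_recr /= sqrtrM ?prodr_ge0 // IH.
Qed.

Lemma normal_pdf_sqrt (v x : R) : 0 < v ->
  normal_pdf 0 (Num.sqrt v) x =
  (Num.sqrt (v * pi *+ 2))^-1 * expR (- (x ^+ 2 / (v *+ 2))).
Proof.
move=> v0; rewrite normal_pdfE ?gt_eqF ?sqrtr_gt0 //.
by rewrite /normal_peak /normal_fun sqr_sqrtr ?ltW // subr0 mulNr.
Qed.

Lemma normal_pdf_mul_expR_sqr (v s x : R) : 0 < v -> 2 * s * v < 1 ->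
  normal_pdf 0 (Num.sqrt v) x * expR (s * x ^+ 2) =
  (Num.sqrt (1 - 2 * s * v))^-1 *
  normal_pdf 0 (Num.sqrt (v / (1 - 2 * s * v))) x.
Proof.
move=> v0 svl; have q0 : 0 < 1 - 2 * s * v by lra.
rewrite !normal_pdf_sqrt ?divr_gt0 // mulrA -invfM -sqrtrM ?ltW //.
rewrite -[LHS]mulrA -expRD; congr (_^-1 * expR _).
  by congr Num.sqrt; field; rewrite gt_eqF.
by field; rewrite !gt_eqF.
Qed.

Lemma integral_normal_pdf_mul_expR_sqr (v s : R) : 0 < v -> 2 * s * v < 1 ->
  (\int[mu]_x (normal_pdf 0 (Num.sqrt v) x * expR (s * x ^+ 2))%:E)%E =
  ((Num.sqrt (1 - 2 * s * v))^-1)%:E.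
Proof.
move=> v0 svl; under eq_integral do rewrite normal_pdf_mul_expR_sqr // EFinM.
rewrite ge0_integralZl_EFin ?integral_normal_pdf ?mule1 //.
- by move=> x _; rewrite lee_fin normal_pdf_ge0.
- by apply/measurable_EFinP; exact: measurable_normal_pdf.
Qed.

Lemma quadform_invmx_diag n (d : 'rV[R]_n) (x : 'I_n -> R) :
  (forall i, d 0 i != 0) ->
  \sum_i \sum_j x i * invmx (diag_mx d) i j * x j = \sum_i x i ^+ 2 / d 0 i.
Proof.
move=> d0; rewrite invmx_diag //; apply: eq_bigr => i _.
rewrite (bigD1 i) //= big1 => [|j ji]; last first.
  by rewrite !mxE eq_sym (negbTE ji) mulr0 mul0r.
by rewrite !mxE eqxx addr0 mulr1n mulrAC -expr2.
Qed.

Lemma gauss_density_diag n (d : 'rV[R]_n) (t : n.-tuple R) :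
  (forall i, 0 < d 0 i) ->
  gauss_density (diag_mx d) t = \prod_i normal_pdf 0 (Num.sqrt (d 0 i)) (tnth t i).
Proof.
move=> d0; under eq_bigr do rewrite normal_pdf_sqrt //.
rewrite big_split /= -expR_sum /gauss_density quadform_invmx_diag; last first.
  by move=> i; rewrite gt_eqF.
have pi2 : 0 < pi *+ 2 :> R by rewrite pmulrn_lgt0 // pi_gt0.
congr (_ * expR _).
  rewrite det_diag -[n in _ ^+ n]card_ord -prodr_const -big_split /=.
  have f_ge0 i : 0 <= pi *+ 2 * d 0 i by rewrite mulr_ge0 ?ltW.
  rewrite powR12_sqrt ?invr_ge0 ?prodr_ge0 // sqrtrV ?prodr_ge0 //.
  rewrite sqrtr_prod // -prodfV.
  by apply: eq_bigr => i _; rewrite mulrnAl mulrC.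
rewrite -sumrN mulr_suml; apply: eq_bigr => i _.
by field; rewrite gt_eqF.
Qed.

End gaussian.

Section pcn_far_jump.
Variable R : realType.

Lemma sqr_eucl_norm D (x : D.-tuple R) : eucl_norm x ^+ 2 = \sum_i tnth x i ^+ 2.
Proof. by rewrite sqr_sqrtr // sumr_ge0 // => i _; rewrite sqr_ge0. Qed.

Lemma eucl_norm_tsubxx D (x : D.-tuple R) : eucl_norm (tsub x x) = 0.
Proof.
by rewrite /eucl_norm big1 ?sqrtr0 // => i _; rewrite tnth_mktuple subrr expr0n.
Qed.

Lemma sqr_eucl_norm_pcn_step_le D (beta : R) (theta xi : D.-tuple R) :
  0 <= beta -> beta <= 1 ->
  eucl_norm (tsub theta (pcn_prop beta theta xi)) ^+ 2 <=
  2 * beta ^+ 2 * eucl_norm theta ^+ 2 + 2 * beta * eucl_norm xi ^+ 2.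
Proof.
move=> b0 b1; rewrite !sqr_eucl_norm !mulr_sumr -big_split /=.
apply: ler_sum => i _; rewrite !tnth_mktuple.
set a := Num.sqrt (1 - beta); set b := Num.sqrt beta.
have a0 : 0 <= a := sqrtr_ge0 _.
have a2 : a ^+ 2 = 1 - beta by rewrite sqr_sqrtr // subr_ge0.
have b2 : b ^+ 2 = beta by rewrite sqr_sqrtr.
have a_le1 : a <= 1 by nra.
have a1 : 1 - a <= beta.
  have : 0 <= a * (1 - a) by rewrite mulr_ge0 // subr_ge0.
  nra.
set t := tnth theta i; set x := tnth xi i.
have u2 : ((1 - a) * t) ^+ 2 <= beta ^+ 2 * t ^+ 2.
  by rewrite exprMn ler_wpM2r ?sqr_ge0 // lerXn2r // nnegrE subr_ge0.
have w2 : (b * x) ^+ 2 = beta * x ^+ 2 by rewrite exprMn b2.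
have -> : (t - (a * t + b * x)) ^+ 2 =
    2 * ((1 - a) * t) ^+ 2 + 2 * (b * x) ^+ 2 - ((1 - a) * t + b * x) ^+ 2 by ring.
by have := sqr_ge0 ((1 - a) * t + b * x); lra.
Qed.

Lemma pcn_far_step_noise_ge D (beta L eta : R) (theta xi : D.-tuple R) :
  0 < beta -> beta <= 1 -> 0 <= eta ->
  eucl_norm theta <= L -> beta * L <= eta / 4 ->
  eta / 2 <= eucl_norm (tsub theta (pcn_prop beta theta xi)) ->
  eta ^+ 2 / (16 * beta) <= eucl_norm xi ^+ 2.
Proof.
move=> b0 b1 e0 hL bL far.
have step := sqr_eucl_norm_pcn_step_le theta xi (ltW b0) b1.
have th0 : 0 <= eucl_norm theta := sqrtr_ge0 _.
have far2 : (eta / 2) ^+ 2 <= eucl_norm (tsub theta (pcn_prop beta theta xi)) ^+ 2.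
  by rewrite lerXn2r // nnegrE ?sqrtr_ge0 // divr_ge0.
have bth : beta * eucl_norm theta <= eta / 4.
  exact: le_trans (ler_wpM2l (ltW b0) hL) bL.
have bth0 : 0 <= beta * eucl_norm theta := mulr_ge0 (ltW b0) th0.
have bth2 : (beta * eucl_norm theta) ^+ 2 <= (eta / 4) ^+ 2.
  by rewrite lerXn2r // nnegrE (le_trans bth0).
by rewrite ler_pdivrMr ?mulr_gt0 //; nra.
Qed.

Lemma expRN_mul_2X_le (x : R) n : 3 / 2 * n%:R <= x ->
  expR (- x) * 2 ^+ n <= expR (- (n%:R / 2)).
Proof.
move=> nx; have e2 : 2 <= expR 1 :> R by have := expR_ge1Dx (1 : R); lra.
apply: (@le_trans _ _ (expR (- x) * expR 1 ^+ n)).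
  by rewrite ler_wpM2l ?expR_ge0 // lerXn2r ?nnegrE ?expR_ge0.
by rewrite -expRM_natr mul1r -expRD ler_expR; lra.
Qed.

End pcn_far_jump.

Section pcn_kernel_bound.
Variable R : realType.
Variables (D : nat) (l : D.-tuple R -> R) (beta L eta : R) (theta : D.-tuple R).
Hypotheses (beta_gt0 : 0 < beta) (beta_le1 : beta <= 1) (eta_gt0 : 0 < eta).
Hypotheses (theta_le : eucl_norm theta <= L) (betaL_le : beta * L <= eta / 4).

Local Notation far := [set th | eta / 2 <= eucl_norm (tsub theta th)].

Lemma indic_far_mul_pcn_acc_le (s : R) (xi : D.-tuple R) : 0 <= s ->
  \1_far (pcn_prop beta theta xi) * pcn_acc l theta (pcn_prop beta theta xi) <=
  expR (s * (eucl_norm xi ^+ 2 - eta ^+ 2 / (16 * beta))).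
Proof.
move=> s0; rewrite indicE; case: (boolP (_ \in far)) => [/set_mem far_p|_] /=.
  rewrite mul1r (@le_trans _ _ 1) ?ge_min ?lexx //.
  apply: le_trans (expR_ge1Dx _); rewrite lerDl mulr_ge0 // subr_ge0.
  exact: (pcn_far_step_noise_ge beta_gt0 beta_le1 (ltW eta_gt0) theta_le betaL_le).
by rewrite mul0r expR_ge0.
Qed.

Lemma pcn_kernel_far_le_diag (d : 'rV[R]_D) (s : R) :
  (forall i, 0 < d 0 i) -> 0 <= s -> (forall i, 2 * s * d 0 i < 1) ->
  (pcn_kernel (diag_mx d) l beta theta far <=
   (expR (- (s * (eta ^+ 2 / (16 * beta)))) *
    \prod_i (Num.sqrt (1 - 2 * s * d 0 i))^-1)%:E)%E.
Proof.
move=> d0 s0 sd1.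
have theta_not_far : \1_far theta = 0 :> R.
  rewrite indicE memNset //= eucl_norm_tsubxx; apply/negP.
  by rewrite -ltNge divr_gt0.
rewrite /pcn_kernel theta_not_far mul0e adde0 /gauss_int.
set T := eta ^+ 2 / (16 * beta).
pose g i x := normal_pdf 0 (Num.sqrt (d 0 i)) x * expR (s * x ^+ 2).
have mgf : leb_iter (fun t : D.-tuple R =>
      (expR (- (s * T)) * \prod_i g i (tnth t i))%:E) =
    (expR (- (s * T)) * \prod_i (Num.sqrt (1 - 2 * s * d 0 i))^-1)%:E.
  apply: leb_iter_prod => [|i x|i|i|i]; rewrite ?expR_ge0 //.
  - by rewrite mulr_ge0 ?normal_pdf_ge0 ?expR_ge0.
  - apply: measurable_funM; first exact: measurable_normal_pdf.
    by apply: measurableT_comp => //; apply: measurable_funM.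
  - exact: integral_normal_pdf_mul_expR_sqr.
have pdf_ge0 t : 0 <= \prod_i normal_pdf 0 (Num.sqrt (d 0 i)) (tnth t i).
  by apply: prodr_ge0 => i _; rewrite normal_pdf_ge0.
rewrite -mgf; apply: le_leb_iter => t; rewrite -EFinM lee_fin gauss_density_diag //.
  by rewrite mulr_ge0 // mulr_ge0 ?indicE // le_min ler01 expR_ge0.
have -> : expR (- (s * T)) * \prod_i g i (tnth t i) =
    (\prod_i normal_pdf 0 (Num.sqrt (d 0 i)) (tnth t i)) *
    expR (s * (eucl_norm t ^+ 2 - T)).
  rewrite /g big_split /= mulrCA -expR_sum -expRD; congr (_ * expR _).
  by rewrite sqr_eucl_norm -mulr_sumr mulrBr addrC.
by apply: ler_wpM2l; [exact: pdf_ge0 | exact: indic_far_mul_pcn_acc_le].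
Qed.

Lemma pcn_kernel_far_le_expR (d : 'rV[R]_D) (delta : R) :
  0 < delta -> (forall i, 0 < d 0 i <= delta) ->
  beta * (D%:R * delta) <= eta ^+ 2 / 64 ->
  (pcn_kernel (diag_mx d) l beta theta far <= (expR (- (D%:R / 2)))%:E)%E.
Proof.
move=> delta_gt0 d_delta beta_small; pose s := 3 / (8 * delta).
have s_gt0 : 0 < s by rewrite divr_gt0 ?mulr_gt0.
have d_gt0 i : 0 < d 0 i by have /andP[] := d_delta i.
have sd_le i : 2 * s * d 0 i <= 3 / 4.
  have /andP[_ di_le] := d_delta i.
  have -> : 2 * s * d 0 i = 3 / 4 * (d 0 i / delta).
    by rewrite /s; field; rewrite gt_eqF.
  have : d 0 i / delta <= 1 by rewrite ler_pdivrMr ?mul1r.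
  lra.
have sd_lt1 i : 2 * s * d 0 i < 1 by have := sd_le i; lra.
have mgf_le2 i : (Num.sqrt (1 - 2 * s * d 0 i))^-1 <= 2.
  have q_ge : 1 / 4 <= 1 - 2 * s * d 0 i by have := sd_le i; lra.
  have sq : Num.sqrt (1 - 2 * s * d 0 i) ^+ 2 = 1 - 2 * s * d 0 i.
    by rewrite sqr_sqrtr // (le_trans _ q_ge).
  rewrite -div1r ler_pdivrMr ?sqrtr_gt0; last by lra.
  by have := sqrtr_ge0 (1 - 2 * s * d 0 i); nra.
apply: le_trans (pcn_kernel_far_le_diag d_gt0 (ltW s_gt0) sd_lt1) _.
have prod_le : \prod_i (Num.sqrt (1 - 2 * s * d 0 i))^-1 <= \prod_(i < D) 2.
  by apply: ler_prod => i _; rewrite invr_ge0 sqrtr_ge0 mgf_le2.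
rewrite lee_fin; apply: le_trans (ler_wpM2l (expR_ge0 _) prod_le) _.
rewrite prodr_const card_ord; apply: expRN_mul_2X_le.
have -> : s * (eta ^+ 2 / (16 * beta)) = 3 / 128 * (eta ^+ 2 / (beta * delta)).
  by rewrite /s; field; rewrite !gt_eqF.
have : 64 * D%:R <= eta ^+ 2 / (beta * delta).
  by rewrite ler_pdivlMr ?mulr_gt0 //; lra.
lra.
Qed.

End pcn_kernel_bound.

Lemma ler_mulr_of_le_divMn (F : realFieldType) n (x y L : F) :
  0 < L -> (0 < n)%N -> x <= y / (L *+ n) -> x * L <= y / n%:R.
Proof.
move=> L_gt0 n_gt0 /(ler_wpM2r (ltW L_gt0)).
rewrite (_ : y / (L *+ n) * L = y / n%:R) //.
by field; rewrite pnatr_eq0 -lt0n n_gt0 gt_eqF.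
Qed.

Theorem lemma4p9 (R : realType) :
  (* (i) C = I_D / D *)
  (forall L eta : R, 0 < L -> 0 < eta ->
    forall (beta : R) (D : nat),
      0 < beta -> beta <= 2^-1 -> beta <= eta / (L *+ 4) -> beta <= eta ^+ 2 / 64%:R ->
      (1 <= D)%N ->
      forall l : D.-tuple R -> R, measurable_fun [set: D.-tuple R] l ->
      forall theta : D.-tuple R, eucl_norm theta <= L ->
        (pcn_kernel ((D%:R)^-1 *: 1%:M) l beta theta
           [set th | (eta / 2 <= eucl_norm (tsub theta th))%R]
         <= (expR (- (D%:R / 2)))%:E)%E)
  /\
  (* (ii) C = Sigma_alpha, alpha > d/2 *)
  (forall (d : nat) (alpha : R), (1 <= d)%N -> d%:R / 2 < alpha ->
   forall L eta : R, 0 < L -> 0 < eta ->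
   exists c : R, 0 < c /\
    forall (beta : R) (D : nat),
      0 < beta -> beta <= 2^-1 -> beta <= eta / (L *+ 4) -> beta <= c * eta ^+ 2 / D%:R ->
      (1 <= D)%N ->
      forall l : D.-tuple R -> R, measurable_fun [set: D.-tuple R] l ->
      forall theta : D.-tuple R, eucl_norm theta <= L ->
        (pcn_kernel (Sigma_alpha d alpha D) l beta theta
           [set th | (eta / 2 <= eucl_norm (tsub theta th))%R]
         <= (expR (- (D%:R / 2)))%:E)%E).
Proof.
split.
  move=> L eta L_gt0 eta_gt0 beta D beta_gt0 beta_half
    /(ler_mulr_of_le_divMn (n := 4) L_gt0 isT) betaL beta_small D_ge1 l _ theta theta_le.
  have D_gt0 : 0 < D%:R :> R by rewrite ltr0n.
  have Dinv_gt0 : 0 < D%:R^-1 :> R by rewrite invr_gt0.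
  rewrite scalemx1 -diag_const_mx.
  apply: (pcn_kernel_far_le_expR l beta_gt0 _ eta_gt0 theta_le betaL Dinv_gt0).
  - lra.
  - by move=> i; rewrite mxE Dinv_gt0 lexx.
  - by rewrite mulfV ?gt_eqF // mulr1.
move=> d alpha _ alpha_gt L eta L_gt0 eta_gt0.
exists (1 / 64); split=> [|beta D beta_gt0 beta_half
  /(ler_mulr_of_le_divMn (n := 4) L_gt0 isT) betaL beta_small D_ge1 l _ theta theta_le].
  lra.
have D_gt0 : 0 < D%:R :> R by rewrite ltr0n.
have e_ge0 : 0 <= alpha *+ 2 / d%:R.
  by rewrite divr_ge0 // mulrn_wge0 // (le_trans _ (ltW alpha_gt)) // divr_ge0.
apply: (pcn_kernel_far_le_expR l beta_gt0 _ eta_gt0 theta_le betaL ltr01).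
- lra.
- move=> i; rewrite mxE powR_gt0 ?ltr0n //= -[X in _ <= X](powRr0 (i.+1)%:R).
  by apply: ler_powR; rewrite ?ler1n // oppr_le0.
- by move: beta_small; rewrite mulr1 -ler_pdivlMr // mul1r [_^-1 * _]mulrC.
Qed.
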